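(* Let $I,S:\mathbb{R}\to\mathbb{R}$ be $2\pi$-periodic Lipschitz functions with $I\ge0$ and $\min_{\theta\in[-\pi,\pi]}I(\theta)S(\theta)<0<\max_{\theta\in[-\pi,\pi]}I(\theta)S(\theta)$. Let $(\theta_i(t))$ solve $\dot\theta_i=\omega_i+\frac{\kappa}{N}\sum_{j=1}^NI(\theta_j)S(\theta_i)$, $\theta_i(0)=\theta_i^0$. Fix $\mathcal B\subset\{1,\dots,N\}$ and let $\|\Omega_{\mathcal B}\|_\infty=\max_{i\in\mathcal B}|\omega_i|$. If \[ \kappa>\frac{N\|\Omega_{\mathcal B}\|_\infty}{\min\{-\min IS,\max IS\}}, \] then $\sup_{t\ge0}\theta_i(t)-\inf_{t\ge0}\theta_i(t)<2\pi$ for all $i\in\mathcal B$. *)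

From HB Require Import structures.
From mathcomp Require Import all_boot all_order all_algebra.
From mathcomp Require Import all_classical all_reals all_analysis.
Set Implicit Arguments. Unset Strict Implicit. Unset Printing Implicit Defensive.
Import Order.TTheory GRing.Theory Num.Theory.
Import numFieldNormedType.Exports.
Local Open Scope classical_set_scope.
Local Open Scope ring_scope.

Definition periodic2pi (R : realType) (f : R -> R) : Prop :=
  forall x, f (x + 2 * pi) = f x.

(* min_{[-pi,pi]} I S  and  max_{[-pi,pi]} I S  (I S continuous, so the
   inf/sup are attained and equal min/max) *)
Definition minIS (R : realType) (I S : R -> R) : R :=
  inf [set I x * S x | x in `[- pi, pi]].
Definition maxIS (R : realType) (I S : R -> R) : R :=
  sup [set I x * S x | x in `[- pi, pi]].

(* ||Omega_B||_oo = max_{i in B} |omega_i|  (0 for empty B) *)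
Definition normOmegaB (R : realType) (N : nat) (omega : 'I_N -> R)
  (B : {set 'I_N}) : R := \big[Num.max/0]_(i in B) `|omega i|.

Definition trajE (R : realType) (f : R -> R) : set (\bar R) :=
  [set (f t)%:E | t in `[0, +oo[].

From HB Require Import structures.
From mathcomp Require Import all_boot all_order all_algebra.
From mathcomp Require Import all_classical all_reals all_analysis.
From mathcomp Require Import lra.
Import Order.TTheory GRing.Theory Num.Theory.
Import numFieldNormedType.Exports.
Local Open Scope classical_set_scope.
Local Open Scope ring_scope.

(* Put c := N |omega_i| / kappa; the hypothesis on kappa says exactly that
   min IS < -c and c < max IS.  Since I >= 0, the coupling term of oscillator i
   is at least (kappa / N) I(theta_i) S(theta_i) when this is positive, so
   theta_i increases whenever I S (theta_i) > c: it can never fall back below a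
   point of the open 2pi-periodic set {I S > c} once it has reached it.
   Symmetrically it can never climb above a point of {I S < -c}.  Each of these
   sets contains an interval of some length eta > 0, hence meets every window of
   length 2pi - eta, and these two kinds of barriers confine theta_i to an
   interval of length 2pi - eta. *)

Lemma lipschitz_continuous {R : realType} {f : R -> R} :
  lipschitz f -> continuous f.
Proof.
move=> /pinfty_ex_gt0 [M M0 fM] x; apply/cvgrPdist_lt => e e0.
apply/nbhs_ballP; exists (e / M); first by rewrite /= divr_gt0.
move=> y; rewrite /ball /= => xy.
by rewrite (le_lt_trans (fM (x, y) _)) // -ltr_pdivlMl // mulrC.
Qed.

Lemma periodicz {U V : zmodType} {f : U -> V} {T : U} :
  periodic f T -> forall (k : int) x, f (x + T *~ k) = f x.
Proof.
move=> fT [n|n] x; first exact: periodicn.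
by rewrite NegzE mulrNz -[in RHS](subrK (T *+ n.+1) x) periodicn.
Qed.

Lemma periodic_window {R : realType} {g : R -> R} {V : set R} {T a : R} :
  0 < T -> periodic g T -> nbhs a (g @^-1` V) ->
  exists2 eta, 0 < eta & forall x, exists2 z, V (g z) & x <= z <= x + T - eta.
Proof.
move=> T0 gT /nbhs_ballP [r r0 aP].
have VgT k z : V (g z) -> V (g (z + T *~ k)) by rewrite periodicz.
pose eta := Num.min (r / 2) (T / 2).
have eta0 : 0 < eta by rewrite lt_min !divr_gt0.
have etar : eta <= r / 2 by rewrite ge_min lexx.
have etaT : eta <= T / 2 by rewrite ge_min lexx orbT.
have Va : V (g a) by apply: aP; exact: ballxx.
have Va_eta : V (g (a - eta)).
  by apply: aP; rewrite /ball /= opprB addrC subrK ger0_norm ?ltW //; lra.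
exists eta => // x.
pose k := Num.ceil ((x - a) / T).
have [xle ltxT] : x <= a + T *~ k /\ a + T *~ k < x + T.
  have := ceil_itv ((x - a) / T); rewrite -/k rmorphB /= => /andP[].
  rewrite -[T *~ k]mulrzr ltr_pdivlMr // ler_pdivrMr // mulrBl rmorph1 mul1r.
  by rewrite [_ * T]mulrC => ? ?; split; lra.
have [le_xT|lt_xT] := leP (a + T *~ k) (x + T - eta).
  by exists (a + T *~ k); [exact: VgT Va | rewrite xle le_xT].
exists (a - eta + T *~ k); first exact: VgT Va_eta.
apply/andP; split; lra.
Qed.

Lemma within_continuous_ball {R : realType} {A : set R} {f : R -> R} {u e : R} :
  {within A, continuous f} -> A u -> 0 < e ->
  exists2 d, 0 < d & forall r, A r -> `|u - r| < d -> `|f u - f r| < e.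
Proof.
move=> /subspace_continuousP cf Au e0.
have /cvgrPdist_lt /(_ e e0) := cf u Au.
rewrite near_withinE => /nbhs_ballP [d d0 fd].
by exists d => // r Ar ur; apply: fd.
Qed.

Lemma last_exit_above {R : realType} {f : R -> R} {p s t : R} :
  {within `[s, t], continuous f} -> s <= t -> p <= f s -> f t < p ->
  exists2 u, s <= u < t & p <= f u /\ forall r, u < r <= t -> f r < p.
Proof.
move=> cf st ps ftp.
pose A := [set r | s <= r <= t /\ p <= f r].
have As : A s by split; rewrite ?lexx ?st.
have Aub : ubound A t by move=> r [/andP[_ ->]].
have supA : has_sup A by split; [exists s | exists t].
have [su ut] : s <= sup A /\ sup A <= t.
  by split; [exact: ub_le_sup supA.2 _ As | exact: ge_sup supA.1 Aub].
have pu : p <= f (sup A).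
  rewrite leNgt; apply/negP => fup.
  have uI : `[s, t]%classic (sup A) by rewrite /= in_itv /= su ut.
  have pe : 0 < p - f (sup A) by rewrite subr_gt0.
  have [d d0 fd] := within_continuous_ball cf uI pe.
  have [a Aa ua] := sup_adherent d0 supA.
  have au := ub_le_sup supA.2 Aa; case: Aa => /andP[sa ta] pa.
  have := fd a; rewrite /= in_itv /= sa ta ger0_norm ?subr_ge0 // => /(_ isT).
  rewrite ltr_norml; lra.
have after r : sup A < r <= t -> f r < p.
  move=> /andP[ur rt]; rewrite ltNge; apply/negP => pr.
  have : r <= sup A.
    apply: (ub_le_sup supA.2); split => //.
    by rewrite rt andbT ltW // (le_lt_trans su).
  lra.
exists (sup A) => //; rewrite su lt_neqAle ut andbT.
by apply: contraTneq ftp => <-; rewrite -leNgt.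
Qed.

Lemma derive1_gt0_barrier {R : realType} {f : R -> R} {a p : R} {U : set R} :
  nbhs p U -> {within `[a, +oo[, continuous f} ->
  (forall r, a < r -> derivable f r 1) ->
  (forall r, a < r -> U (f r) -> 0 < derive1 f r) ->
  forall s t, a <= s -> s <= t -> p <= f s -> p <= f t.
Proof.
move=> /nbhs_ballP [rho rho0 pU] cf df dfU s t a_s st ps.
rewrite leNgt; apply/negP => ftp.
have sub_a x y : a <= x -> `[x, y] `<=` `[a, +oo[.
  by move=> ax r; rewrite /= !in_itv /= andbT => /andP[/(le_trans ax)].
have [u /andP[su ut] [pu after]] :=
  last_exit_above (continuous_subspaceW (sub_a s t a_s) cf) st ps ftp.
have au : a <= u := le_trans a_s su.
have [d d0 fd] := within_continuous_ball cf (sub_a u u au u (lexx _)) rho0.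
pose b := Num.min t (u + d / 2).
have ub : u < b by rewrite lt_min ut /=; lra.
have bt : b <= t by rewrite ge_min lexx.
have bud : b <= u + d / 2 by rewrite ge_min lexx orbT.
suff : f u < f b by have := after b; rewrite ub bt => /(_ isT); lra.
apply: (@gtr0_derive1_lt_cc R f u b); rewrite ?in_itv /= ?lexx ?(ltW ub) //.
- by move=> r; rewrite in_itv /= => /andP[ur _]; apply: df; apply: le_lt_trans ur.
- move=> r; rewrite in_itv /= => /andP[ur rb]; apply: dfU; first lra.
  have fr : f r < p by apply: after; rewrite ur /=; lra.
  have ar : `[a, +oo[%classic r by rewrite /= in_itv /= andbT; lra.
  have ur_d : `|u - r| < d by rewrite ltr0_norm ?subr_lt0 // opprB; lra.
  have := fd r ar ur_d; rewrite ltr_norml => /andP[_ fur].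
  by apply: pU; rewrite /ball /= gtr0_norm; lra.
- exact: continuous_subspaceW (sub_a u b au) cf.
Qed.

Lemma derive1_lt0_barrier {R : realType} {f : R -> R} {a p : R} {U : set R} :
  nbhs p U -> {within `[a, +oo[, continuous f} ->
  (forall r, a < r -> derivable f r 1) ->
  (forall r, a < r -> U (f r) -> derive1 f r < 0) ->
  forall s t, a <= s -> s <= t -> f s <= p -> f t <= p.
Proof.
move=> Up cf df dfU s t a_s st fsp; rewrite -lerN2.
apply: (@derive1_gt0_barrier R (- f) a (- p) [set y | U (- y)]) _ _ a_s st _.
- by rewrite nbhsN; apply: filterS Up => y /=; rewrite opprK.
- by move=> x; apply: cvgN; exact: cf.
- by move=> r ar; apply: derivableN; exact: df.
- move=> r ar; rewrite /= opprK => Ur.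
  by rewrite derive1N ?oppr_gt0; [exact: dfU | exact: df].
- by rewrite lerN2.
Qed.

Lemma coupled_drift_gt0 {R : realFieldType} {N : nat} {x : 'I_N -> R}
    {i : 'I_N} {s w kappa : R} :
  (forall j, 0 <= x j) -> 0 < kappa -> N%:R * `|w| / kappa < x i * s ->
  0 < w + kappa / N%:R * \sum_(j < N) x j * s.
Proof.
move=> x_ge0 kappa_gt0 lt_w.
have N_gt0 : 0 < N%:R :> R by rewrite ltr0n (leq_ltn_trans _ (ltn_ord i)).
have s_ge0 : 0 <= s.
  rewrite leNgt; apply/negP => s_lt0.
  have : x i * s <= 0 by rewrite mulr_ge0_le0 // ltW.
  have : 0 <= N%:R * `|w| / kappa by rewrite divr_ge0 ?mulr_ge0 // ltW.
  lra.
have sum_ge : x i * s <= \sum_(j < N) x j * s.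
  by rewrite (bigD1 i) //= lerDl sumr_ge0 // => j _; rewrite mulr_ge0.
have : `|w| < kappa / N%:R * (x i * s).
  by rewrite -ltr_pdivrMl ?divr_gt0 // invf_div mulrAC.
have : kappa / N%:R * (x i * s) <= kappa / N%:R * \sum_(j < N) x j * s.
  by rewrite ler_wpM2l // ltW // divr_gt0.
have : - w <= `|w| by rewrite -normrN ler_norm.
lra.
Qed.

Lemma coupled_drift_lt0 {R : realFieldType} {N : nat} {x : 'I_N -> R}
    {i : 'I_N} {s w kappa : R} :
  (forall j, 0 <= x j) -> 0 < kappa -> x i * s < - (N%:R * `|w| / kappa) ->
  w + kappa / N%:R * \sum_(j < N) x j * s < 0.
Proof.
move=> x_ge0 kappa_gt0 lt_w.
rewrite -oppr_gt0 opprD -mulrN -sumrN.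
under eq_bigr do rewrite -mulrN.
by apply: (coupled_drift_gt0 (i := i)) => //; rewrite normrN mulrN ltrNr.
Qed.

Lemma ereal_sup_sub_inf_le {R : realType} {A : set R} {f : R -> R} {D : R} :
  A !=set0 -> (forall s t, A s -> A t -> f t <= f s + D) ->
  (ereal_sup [set (f t)%:E | t in A] - ereal_inf [set (f t)%:E | t in A]
     <= D%:E)%E.
Proof.
move=> [s0 As0] fD; set E := [set (f t)%:E | t in A].
have sup_le s : A s -> (ereal_sup E <= (f s + D)%:E)%E.
  by move=> As; apply: ge_ereal_sup => _ [t At <-]; rewrite lee_fin fD.
have Es0 : E (f s0)%:E by exists s0.
have [r supE] : exists r, ereal_sup E = r%:E.
  case: (ereal_sup E) (sup_le s0 As0) (ereal_sup_ubound Es0) => [r| |] //.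
  by exists r.
have inf_ge : ((r - D)%:E <= ereal_inf E)%E.
  apply: le_ereal_inf_tmp => _ [t At <-]; rewrite lee_fin.
  by have := sup_le t At; rewrite supE lee_fin; lra.
case: (ereal_inf E) inf_ge (ereal_inf_lbound Es0) => [r'| |] //.
by rewrite supE !lee_fin; lra.
Qed.

Lemma coupling_threshold {R : realFieldType} {n w W m kappa : R} :
  0 <= n -> 0 < m -> `|w| <= W -> n * W / m < kappa ->
  0 < kappa /\ n * `|w| / kappa < m.
Proof.
move=> n_ge0 m_gt0 wW lt_kappa.
have kappa_gt0 : 0 < kappa.
  apply: le_lt_trans _ lt_kappa; apply: divr_ge0 (ltW m_gt0).
  exact: mulr_ge0 n_ge0 (le_trans (normr_ge0 w) wW).
split => //; move: lt_kappa; rewrite !ltr_pdivrMr // [m * _]mulrC.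
exact/le_lt_trans/ler_wpM2l.
Qed.

Section oscillator.
Context {R : realType} {N : nat} {I S : R -> R} {omega : 'I_N -> R}.
Context {kappa : R} {theta : 'I_N -> R -> R}.
Hypothesis I_ge0 : forall x, 0 <= I x.
Hypothesis IS_cont : continuous (fun x => I x * S x).
Hypothesis kappa_gt0 : 0 < kappa.
Hypothesis theta_cont : forall i, {within `[0, +oo[, continuous (theta i)}.
Hypothesis theta_ode : forall i t, 0 < t -> derivable (theta i) t 1 /\
  derive1 (theta i) t = omega i +
    kappa / N%:R * \sum_(j < N) I (theta j t) * S (theta i t).

Lemma oscillator_stays_above i z s t :
  N%:R * `|omega i| / kappa < I z * S z ->
  0 <= s -> s <= t -> z <= theta i s -> z <= theta i t.
Proof.
move=> ISz.
apply: (derive1_gt0_barrier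
  (U := [set y | N%:R * `|omega i| / kappa < I y * S y]) _ (theta_cont i)).
- exact: cvgr_gt _ (IS_cont z) _ ISz.
- by move=> r r_gt0; case: (theta_ode i r r_gt0).
- move=> r r_gt0 ISr; case: (theta_ode i r r_gt0) => _ ->.
  exact: (coupled_drift_gt0 (x := fun j => I (theta j r)) (i := i)
    (fun j => I_ge0 _) kappa_gt0 ISr).
Qed.

Lemma oscillator_stays_below i z s t :
  I z * S z < - (N%:R * `|omega i| / kappa) ->
  0 <= s -> s <= t -> theta i s <= z -> theta i t <= z.
Proof.
move=> ISz.
apply: (derive1_lt0_barrier
  (U := [set y | I y * S y < - (N%:R * `|omega i| / kappa)]) _ (theta_cont i)).
- exact: cvgr_lt _ (IS_cont z) _ ISz.
- by move=> r r_gt0; case: (theta_ode i r r_gt0).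
- move=> r r_gt0 ISr; case: (theta_ode i r r_gt0) => _ ->.
  exact: (coupled_drift_lt0 (x := fun j => I (theta j r)) (i := i)
    (fun j => I_ge0 _) kappa_gt0 ISr).
Qed.

Lemma oscillator_range i T eta1 eta2 :
  (forall x, exists2 z, N%:R * `|omega i| / kappa < I z * S z &
     x <= z <= x + T - eta1) ->
  (forall x, exists2 z, I z * S z < - (N%:R * `|omega i| / kappa) &
     x <= z <= x + T - eta2) ->
  forall s t, 0 <= s -> 0 <= t ->
    theta i t <= theta i s + (T - Num.min eta1 eta2).
Proof.
move=> above below s t s_ge0 t_ge0.
have [min1 min2] : Num.min eta1 eta2 <= eta1 /\ Num.min eta1 eta2 <= eta2.
  by rewrite !ge_min !lexx orbT.
have [st|ts] := leP s t.
- have [z ISz /andP[sz zs]] := below (theta i s).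
  by have := oscillator_stays_below i z s t ISz s_ge0 st sz; lra.
- have [z ISz /andP[zt tz]] := above (theta i t - (T - eta1)).
  have zt' : z <= theta i t by lra.
  by have := oscillator_stays_above i z t s ISz t_ge0 (ltW ts) zt'; lra.
Qed.

End oscillator.

Theorem proposition4p1 (R : realType) (I S : R -> R) (N : nat)
  (omega : 'I_N -> R) (kappa : R) (theta0 : 'I_N -> R)
  (theta : 'I_N -> R -> R) (B : {set 'I_N}) :
  periodic2pi I -> periodic2pi S -> lipschitz I -> lipschitz S ->
  (forall x, 0 <= I x) ->
  minIS I S < 0 -> 0 < maxIS I S ->
  (* theta solves the ODE on [0, +oo) with theta(0) = theta0 *)
  (forall i, theta i 0 = theta0 i) ->
  (forall i, {within `[0, +oo[, continuous (theta i)}) ->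
  (forall i t, 0 < t -> derivable (theta i) t 1 /\
     derive1 (theta i) t = omega i +
        kappa / N%:R * \sum_(j < N) I (theta j t) * S (theta i t)) ->
  kappa > N%:R * normOmegaB omega B / Num.min (- minIS I S) (maxIS I S) ->
  forall i, i \in B ->
    (ereal_sup (trajE (theta i)) - ereal_inf (trajE (theta i))
       < (2 * pi)%:E)%E.
Proof.
move=> perI perS lipI lipS I_ge0 minIS_lt0 maxIS_gt0 _ theta_cont theta_ode
  kappa_gt i iB.
pose c := N%:R * `|omega i| / kappa.
have [kappa_gt0 c_lt] : 0 < kappa /\ c < Num.min (- minIS I S) (maxIS I S).
  apply: coupling_threshold kappa_gt; rewrite ?lt_min ?oppr_gt0 ?minIS_lt0 //.
  by rewrite /normOmegaB (bigD1 i) //= le_max lexx.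
have [c_max c_min] : c < maxIS I S /\ minIS I S < - c.
  by move: c_lt; rewrite lt_min ltrNr => /andP[].
have IS_cont : continuous (fun x => I x * S x).
  by move=> x; apply: continuousM; apply: lipschitz_continuous.
have IS_per : periodic (fun x => I x * S x) (2 * pi).
  by move=> x; rewrite perI perS.
have pi2_gt0 : 0 < 2 * pi :> R by rewrite mulr_gt0 ?pi_gt0.
have IS_ne : [set I x * S x | x in `[- pi, pi]] !=set0.
  by exists (I 0 * S 0), 0; rewrite //= in_itv /= oppr_le0 andbb ltW ?pi_gt0.
have [_ [x1 _ <-] ISx1] := sup_gt IS_ne c_max.
have [_ [x2 _ <-] ISx2] := inf_lt IS_ne c_min.
have [eta1 eta1_gt0 above] := periodic_window (V := [set y | c < y])
  pi2_gt0 IS_per (cvgr_gt _ (IS_cont x1) _ ISx1).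
have [eta2 eta2_gt0 below] := periodic_window (V := [set y | y < - c])
  pi2_gt0 IS_per (cvgr_lt _ (IS_cont x2) _ ISx2).
apply: le_lt_trans (ereal_sup_sub_inf_le (D := 2 * pi - Num.min eta1 eta2) _ _) _.
- by exists 0; rewrite /= in_itv /= lexx.
- move=> s t; rewrite /= !in_itv /= !andbT.
  exact: oscillator_range I_ge0 IS_cont kappa_gt0 theta_cont theta_ode
    i _ _ _ above below s t.
- by rewrite lte_fin gtrBl lt_min eta1_gt0.
Qed.
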